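(* The Median mechanism $2$-approximates the complemented Gini index of utilities.
   Context: One facility is located on $[0,1]$; $n\ge1$ agents (any $n$) have locations $x_1\le\dots\le x_n$ in $[0,1]$. For a facility at $y$, agent $i$ has distance $d_i=|x_i-y|$ and utility $u_i=1-d_i$. The Gini index of utilities is $G_u=\frac{\sum_i\sum_j|u_i-u_j|}{2n\sum_i u_i}$ and the complemented Gini index is $1-G_u$. The Median mechanism locates the facility at $x_{\lceil n/2\rceil}$. For a mechanism $M$ and a maximization objective $O$, the approximation ratio is the supremum over all profiles $x$ (over all numbers of agents) of $\mathrm{OPT}(x)/O(M(x))$, where $\mathrm{OPT}(x)=\max_{y\in[0,1]}O(y)$; $M$ ''$\alpha$-approximates'' $O$ if this approximation ratio equals $\alpha$. *)

From HB Require Import structures.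
From mathcomp Require Import all_boot all_order all_algebra.
From mathcomp Require Import boolp classical_sets reals.
Set Implicit Arguments. Unset Strict Implicit. Unset Printing Implicit Defensive.
Import Order.TTheory GRing.Theory Num.Theory.
Local Open Scope ring_scope.
Local Open Scope classical_set_scope.

Section Defs.
Variable R : realType.

Definition utility n (x : 'I_n -> R) (y : R) (i : 'I_n) : R := 1 - `|x i - y|.

Definition gini_u n (x : 'I_n -> R) (y : R) : R :=
  (\sum_(i < n) \sum_(j < n) `|utility x y i - utility x y j|) /
  (2 * n%:R * \sum_(i < n) utility x y i).

Definition cgini n (x : 'I_n -> R) (y : R) : R := 1 - gini_u x y.

Definition opt_cgini n (x : 'I_n -> R) : R :=
  sup [set cgini x y | y in [set y : R | 0 <= y <= 1]].

(* Median mechanism: x_{ceil(n/2)} (1-indexed) = index (n-1)/2 (0-indexed);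
   here n = m.+1. *)
Definition median_mech m (x : 'I_m.+1 -> R) : R := x (inord (m./2)).

Definition valid_profile n (x : 'I_n -> R) : Prop :=
  (forall i : 'I_n, 0 <= x i <= 1) /\
  (forall i j : 'I_n, (i <= j)%N -> x i <= x j).

Definition median_ratio_cgini : R :=
  sup [set r : R | exists m (x : 'I_m.+1 -> R),
         valid_profile x /\ r = opt_cgini x / cgini x (median_mech x)].

End Defs.

From mathcomp Require Import all_boot all_order all_algebra zify.
From mathcomp Require Import boolp classical_sets reals.
From mathcomp Require Import ring lra.
Set Implicit Arguments. Unset Strict Implicit. Unset Printing Implicit Defensive.
Import Order.TTheory GRing.Theory Num.Theory.
Local Open Scope ring_scope.
Local Open Scope classical_set_scope.

(* Utilities lie in [0, 1], and for such numbers |u - v| <= u + v - 2uv;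
   summing over all pairs bounds the Gini index by 1 - U/n, where U is the
   total utility, so the complemented Gini index is at least the mean utility.
   At the median the total distance is at most n/2: pairing agent i with agent
   n + 1 - i, the median lies between them, so their two distances add up to
   |x_i - x_(n+1-i)| <= 1.  Hence the median achieves at least 1/2, while no
   location achieves more than 1.  Two agents at 0 and 1 attain the ratio 2:
   the median sits at 0 with value 1/2, the midpoint has value 1. *)

Section UnitInterval.
Variable R : realFieldType.

Lemma normB_le_unit (a b : R) : 0 <= a <= 1 -> 0 <= b <= 1 ->
  `|a - b| <= a + b - 2 * a * b.
Proof.
by move=> /andP[a0 a1] /andP[b0 b1]; rewrite ler_norml; apply/andP; split; nra.
Qed.

Lemma sum_pair_normB_le n (u : 'I_n -> R) : (forall i, 0 <= u i <= 1) ->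
  \sum_(i < n) \sum_(j < n) `|u i - u j| <=
  2 * n%:R * (\sum_(i < n) u i) - 2 * (\sum_(i < n) u i) ^+ 2.
Proof.
move=> u01; set U := \sum_(i < n) u i.
have sum_expand :
    \sum_(i < n) \sum_(j < n) (u i + u j - 2 * u i * u j) =
    2 * n%:R * U - 2 * U ^+ 2.
  under eq_bigr => i _ do
    rewrite sumrB big_split /= sumr_const card_ord -mulr_sumr -/U.
  rewrite sumrB big_split /= sumr_const card_ord -mulr_suml -mulr_sumr.
  by rewrite sumrMnl -/U; ring.
rewrite -sum_expand; apply: ler_sum => i _; apply: ler_sum => j _.
exact: normB_le_unit.
Qed.

Lemma normB_between (a b c : R) : b <= a -> a <= c ->
  `|b - a| + `|c - a| = `|b - c|.
Proof.
move=> ba ac; rewrite [`|b - a|]distrC [`|b - c|]distrC.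
by rewrite !ger0_norm ?subr_ge0 ?(le_trans ba ac) //; ring.
Qed.

Lemma sum_dist_mid_le m (x : 'I_m.+1 -> R) (k : 'I_m.+1) :
    (forall i, 0 <= x i <= 1) ->
    {homo x : i j / (i <= j)%N >-> i <= j} ->
    (forall i : 'I_m.+1, minn i (m - i) <= k <= maxn i (m - i))%N ->
  (\sum_(i < m.+1) `|x i - x k|) *+ 2 <= m.+1%:R.
Proof.
move=> x01 x_sorted k_mid.
have pair_le1 i : `|x i - x k| + `|x (rev_ord i) - x k| <= 1.
  have dist_le1 : `|x i - x (rev_ord i)| <= 1.
    have /andP[? ?] := x01 i; have /andP[? ?] := x01 (rev_ord i).
    by rewrite ler_norml; apply/andP; split; lra.
  have := k_mid i; case: (leqP i (m - i)) => [im|mi] /andP[lo hi].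
    by rewrite normB_between ?x_sorted.
  by rewrite addrC normB_between ?x_sorted // distrC.
rewrite mulr2n {2}(reindex_inj rev_ord_inj) /= -big_split /=.
apply: le_trans (ler_sum _ (fun i _ => pair_le1 i)) _.
by rewrite sumr_const card_ord.
Qed.

End UnitInterval.

Lemma median_index_mid m (i : 'I_m.+1) :
  (minn i (m - i) <= @inord m m./2 <= maxn i (m - i))%N.
Proof. by rewrite inordK; have := ltn_ord i; lia. Qed.

Section Gini.
Variable R : realType.

Lemma sup_eq_max (E : set R) (a : R) : E a -> ubound E a -> sup E = a.
Proof.
move=> Ea a_ub; apply/le_anti/andP; split.
  by apply: ge_sup a_ub; exists a.
by apply: ub_le_sup => //; exists a.
Qed.

Lemma utility_in01 n (x : 'I_n -> R) y i : 0 <= x i <= 1 -> 0 <= y <= 1 ->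
  0 <= utility x y i <= 1.
Proof.
move=> /andP[xi0 xi1] /andP[y0 y1]; rewrite /utility.
have dist_le1 : `|x i - y| <= 1 by rewrite ler_norml; apply/andP; split; lra.
by have dist_ge0 := normr_ge0 (x i - y); apply/andP; split; lra.
Qed.

Lemma cgini_le1 n (x : 'I_n -> R) y : (forall i, 0 <= x i <= 1) ->
  0 <= y <= 1 -> cgini x y <= 1.
Proof.
move=> x01 y01; rewrite /cgini /gini_u gerBl; apply: divr_ge0.
  by apply: sumr_ge0 => i _; apply: sumr_ge0.
rewrite !mulr_ge0 //; apply: sumr_ge0 => i _.
by have /andP[] := utility_in01 (x01 i) y01.
Qed.

Lemma opt_cgini_le1 n (x : 'I_n -> R) : (forall i, 0 <= x i <= 1) ->
  opt_cgini x <= 1.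
Proof.
move=> x01; apply: ge_sup.
  by exists (cgini x 0), 0; rewrite //= lexx ler01.
by move=> _ [y y01 <-]; exact: cgini_le1.
Qed.

Lemma mean_utility_le_cgini n (x : 'I_n -> R) y : (0 < n)%N ->
    (forall i, 0 <= x i <= 1) -> 0 <= y <= 1 ->
  (\sum_(i < n) utility x y i) / n%:R <= cgini x y.
Proof.
move=> n_gt0 x01 y01; have u01 i := utility_in01 (x01 i) y01.
have n_pos : (0 : R) < n%:R by rewrite ltr0n.
rewrite /cgini /gini_u; set U := \sum_(i < n) utility x y i.
set N := \sum_(i < n) \sum_(j < n) _.
have U_ge0 : 0 <= U by apply: sumr_ge0 => i _; have /andP[] := u01 i.
have [->|U_neq0] := eqVneq U 0.
  (* zero total utility: the Gini index degenerates to [N / 0 = 0] *)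
  by rewrite mul0r mulr0 invr0 mulr0 subr0 ler01.
have U_pos : 0 < U by rewrite lt0r U_neq0.
rewrite lerBrDr addrC -lerBrDr ler_pdivrMr; last by rewrite !mulr_gt0.
have -> : (1 - U / n%:R) * (2 * n%:R * U) = 2 * n%:R * U - 2 * U ^+ 2.
  by field; rewrite lt0r_neq0.
exact: sum_pair_normB_le.
Qed.

Lemma sum_utility_median m (x : 'I_m.+1 -> R) : valid_profile x ->
  m.+1%:R <= 2 * \sum_(i < m.+1) utility x (median_mech x) i.
Proof.
move=> [x01 x_sorted].
have := sum_dist_mid_le x01 x_sorted (@median_index_mid m).
by rewrite /utility sumrB sumr_const card_ord mulr2n; lra.
Qed.

Lemma cgini_median_ge_half m (x : 'I_m.+1 -> R) : valid_profile x ->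
  1 / 2 <= cgini x (median_mech x).
Proof.
move=> x_valid.
apply: le_trans (mean_utility_le_cgini _ x_valid.1 (x_valid.1 _)) => //.
by have := sum_utility_median x_valid; rewrite ler_pdivlMr ?ltr0n //; lra.
Qed.

Lemma median_ratio_le2 m (x : 'I_m.+1 -> R) : valid_profile x ->
  opt_cgini x / cgini x (median_mech x) <= 2.
Proof.
move=> x_valid; have med := cgini_median_ge_half x_valid.
have opt := opt_cgini_le1 x_valid.1.
have med_pos : 0 < cgini x (median_mech x).
  by apply: lt_le_trans med; rewrite divr_gt0.
by rewrite ler_pdivrMr //; lra.
Qed.

Definition endpoints : 'I_2 -> R := fun i => (i : nat)%:R.

Lemma endpoints_valid : valid_profile endpoints.
Proof.
split=> [i|i j ij]; last by rewrite ler_nat.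
by rewrite /endpoints ler0n lern1 -ltnS ltn_ord.
Qed.

Lemma cgini_endpoints y : 0 <= y <= 1 ->
  cgini endpoints y = 1 - `|1 - 2 * y| / 2.
Proof.
move=> /andP[y0 y1].
rewrite /cgini /gini_u /utility /endpoints !big_ord_recr !big_ord0 /=.
rewrite sub0r normrN (ger0_norm y0) (ger0_norm (_ : 0 <= 1 - y)) ?subr_ge0 //.
have -> : 1 - y - (1 - (1 - y)) = 1 - 2 * y by ring.
have -> : 1 - (1 - y) - (1 - y) = - (1 - 2 * y) by ring.
rewrite !subrr normr0 normrN; field.
by rewrite subKr subrK oner_neq0.
Qed.

Lemma opt_cgini_endpoints : opt_cgini endpoints = 1.
Proof.
apply: sup_eq_max => [|_ [y y01 <-]]; last exact: cgini_le1 endpoints_valid.1 _.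
have half01 : 0 <= (1 / 2 : R) <= 1 by apply/andP; split; lra.
exists (1 / 2) => //=; rewrite cgini_endpoints //.
by rewrite (_ : 1 - 2 * (1 / 2) = 0) ?normr0 ?mul0r ?subr0 //; field.
Qed.

Lemma cgini_median_endpoints : cgini endpoints (median_mech endpoints) = 1 / 2.
Proof.
rewrite /median_mech /endpoints inordK //= cgini_endpoints ?lexx ?ler01 //.
by rewrite mulr0 subr0 normr1; field.
Qed.

End Gini.

Theorem theorem3 (R : realType) : median_ratio_cgini R = 2.
Proof.
apply: sup_eq_max => [|_ [m [x [x_valid ->]]]]; last exact: median_ratio_le2.
exists 1%N, (@endpoints R); split; first exact: endpoints_valid.
by rewrite opt_cgini_endpoints cgini_median_endpoints; field.
Qed.
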